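(* In the ascending-price auction $G^*$ (defined in the context), for every bidder $i$, every information set $\boldsymbol h_i$ of $i$ containing at least two histories, and every partition $\{\boldsymbol h_i^1,\boldsymbol h_i^2\}$ of $\boldsymbol h_i$ into two nonempty sets, the illuminating (ILL) with respect to $\boldsymbol h_i,\boldsymbol h_i^1,\boldsymbol h_i^2$ is not incentive-preserving (with respect to the second-price auction rule $f$).
   Context: General framework. Agents $N$ with finite type spaces $\Theta_i$, types inducing complete transitive preferences $R(\theta_i)$ over outcomes; an SCF $f$ maps type profiles to outcomes. A gradual mechanism (GM) implementing $f$ is a finite extensive game form with perfect recall (possibly simultaneous moves, all agents active at the initial history, information sets partitioning each agent's decision nodes, outcome function on terminal histories) in which each action of agent $i$ is a nonempty subset of $\Theta_i$, at each decision node of $i$ the available actions are pairwise disjoint with union equal to the last action $\Theta_i(h)$ of $i$ taken before (or $\Theta_i$ if none), and each terminal history $z$ receives outcome $f(\theta)$ for any $\theta\in\Theta(z)=\prod_k\Theta_k(z)$. For a set $\boldsymbol h$ of histories contained in an information set of $i$: $\Theta_i(\boldsymbol h)$ is $i$'s current report there and $\Theta_{-i}(\boldsymbol h)=\bigcup_{h\in\boldsymbol h}\prod_{k\ne i}\Theta_k(h)$. A history $h$ is consistent with a strategy profile $s_M$ of agents in $M\subsetneq N$ if it lies on the path of some completion of $s_M$; a type profile $\theta$ is consistent with $s_M$ if the terminal history $z$ with $\theta\in\Theta(z)$ is. ILL. Given an information set $\boldsymbol h_i$ and a partition into nonempty $\boldsymbol h_i^1,\boldsymbol h_i^2$, the ILL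 splits $\boldsymbol h_i$ into these two information sets (and splits $i$'s later information sets accordingly), leaving everything else unchanged. It is incentive-preserving if for every agent $j\ne i$, all $\theta_i^1,\theta_i^2\in\Theta_i(\boldsymbol h_i)$, $\theta_j^1,\theta_j^2\in\Theta_j$, $\theta_{-i,j}^1,\theta_{-i,j}^2$ (type profiles of agents other than $i,j$) such that (i) $(\theta_j^1,\theta_{-i,j}^1)\in\Theta_{-i}(\boldsymbol h_i^1)$, (ii) $(\theta_j^2,\theta_{-i,j}^2)\in\Theta_{-i}(\boldsymbol h_i^2)$, (iii) some strategy profile $s_{-i,j}$ of agents other than $i,j$ is consistent with both $(\theta_i^1,\theta_j^1,\theta_{-i,j}^1)$ and $(\theta_i^2,\theta_j^2,\theta_{-i,j}^2)$, we have $f(\theta_i^1,\theta_j^1,\theta_{-i,j}^1)\,R(\theta_j^1)\,f(\theta_i^2,\theta_j^2,\theta_{-i,j}^2)$. Auction environment. Bidders $N=\{1,\dots,n\}$ ($n\ge2$), each with private value $v_i\in V=\{1,\dots,m\}$ ($m\ge2$), so $\Theta_i=V$. An outcome is a probability distribution over which bidder receives the item together with the price the winner pays; bidder $i$ with value $v_i$ ranks outcomes by expected payoff (probability of winning times $v_i$ minus the price paid upon winning). The second-price auction rule $f$ assigns to each value profile $v$ the outcome in which the item goes, with equal probability, to one of the bidders with the highest value, who pays the second-highest entry of $v$ (equal to the highest value if there is a tie at the top). Ascending-price auction $G^*$. Price levels $p=1,2,\dots$. At $p=1$ all bidders are active; at $p\ge2$ the active bidders are those who stayed at $p-1$. At price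 $p\le m-1$, active bidders move one at a time in increasing index order; each chooses ''stay'', the action $\{v\in V:v>p\}$, or ''leave'', the action $\{v\in V:v=p\}$. After all active bidders have moved at $p$: if exactly one stayed, she wins and pays $p$; if none stayed, a uniformly random bidder among those who left at $p$ wins and pays $p$; if at least two stayed and $p<m-1$, the price rises to $p+1$; if at least two stayed and $p=m-1$, the auction stops and a uniformly random bidder among those who stayed at $m-1$ wins and pays $m$. Information: when bidder $i$ moves at price $p$, she knows all choices at earlier price levels; regarding the bidders who moved before her at price $p$: if at least two of them stayed she knows exactly their choices, otherwise she knows only that at most one of them stayed. That is, an information set of $i$ is a singleton unless it contains a history in which fewer than two earlier movers at price $p$ stayed, in which case it consists of all histories that coincide with it at all previous price levels and in which fewer than two earlier movers at price $p$ stayed. *)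

From mathcomp Require Import all_boot all_order all_algebra.

Unset Printing Implicit Defensive.

Import Order.TTheory GRing.Theory Num.Theory.

(* Bidders are 0, ..., n-1 (the paper's 1..n, same order); values are the
   naturals 1..m.  A history is the sequence of stay (true) / leave (false)
   choices in the order in which they are made. *)

Definition inV (m v : nat) : bool := (1 <= v <= m)%N.

(* Game state at a history:
   Dec p A d : decision node at price p, A = active bidders at p (increasing
               order), d = choices already made at price p by the first
               (size d) bidders of A (the next mover is the (size d)-th one);
   Term      : terminal history. *)
Inductive node := Dec of nat & seq nat & seq bool | Term.

Definition step (m : nat) (x : option node) (b : bool) : option node :=
  match x with
  | Some (Dec p A d) =>
      let d' := rcons d b in
      if (size d' < size A)%N then Some (Dec p A d')
      else let S := mask d' A in
           if (1 < size S)%N && (p.+1 < m)%N then Some (Dec p.+1 S [::])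
           else Some Term
  | _ => None
  end.

(* [None] means that h is not a history of G*. *)
Definition exec (n m : nat) (h : seq bool) : option node :=
  foldl (step m) (Some (Dec 1 (iota 0 n) [::])) h.

Definition is_terminal n m h : bool :=
  if exec n m h is Some Term then true else false.

Definition mover n m h : option nat :=
  if exec n m h is Some (Dec _ A d) then Some (nth 0 A (size d)) else None.

Definition price_at n m h : nat :=
  if exec n m h is Some (Dec p _ _) then p else 0.

(* Theta_k(h): the last action of bidder k taken before h, or V if none.
   Stay at price q is the action {v in V | v > q}; leave is {v in V | v = q}. *)
Definition theta_set n m (h : seq bool) (k : nat) : pred nat :=
  let ts := [seq t <- iota 0 (size h) | mover n m (take t h) == Some k] in
  match ts with
  | [::] => fun v => inV m v
  | t0 :: _ =>
      let t := last t0 ts in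
      let q := price_at n m (take t h) in
      if nth false h t then fun v => (q < v <= m)%N else fun v => v == q
  end.

(* h and h' lie in the same information set of G*: both are decision nodes,
   they coincide at all previous price levels, the same bidder moves, and
   either h = h' or at both fewer than two earlier movers at the current
   price stayed. *)
Definition same_info n m (h h' : seq bool) : bool :=
  match exec n m h, exec n m h' with
  | Some (Dec _ _ d), Some (Dec _ _ d') =>
      [&& take (size h - size d) h == take (size h' - size d') h',
          size d == size d' &
          (h == h') || ((count id d < 2)%N && (count id d' < 2)%N)]
  | _, _ => false
  end.

Definition info_set n m (h0 : seq bool) : pred (seq bool) :=
  fun h => same_info n m h0 h.

(* Strategies: s k h is bidder k's choice (stay = true) at decision node h.
   Both actions are available at every decision node of G*. *)
Definition strategy := nat -> seq bool -> bool.

Definition measurable_on n m (P : pred nat) (s : strategy) : Prop :=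
  forall k h h', P k -> mover n m h = Some k -> same_info n m h h' ->
    s k h = s k h'.

Definition on_path n m (s : strategy) (h : seq bool) : Prop :=
  forall t, (t < size h)%N ->
    exists k, mover n m (take t h) = Some k /\ nth false h t = s k (take t h).

Definition hist_consistent n m (P : pred nat) (s : strategy) h : Prop :=
  exists s' : strategy,
    measurable_on n m predT s' /\
    (forall k h', P k -> mover n m h' = Some k -> s' k h' = s k h') /\
    on_path n m s' h.

Definition prof_consistent n m (P : pred nat) (s : strategy)
  (theta : 'I_n -> nat) : Prop :=
  exists z, is_terminal n m z /\
    (forall k : 'I_n, theta_set n m z k (theta k)) /\
    hist_consistent n m P s z.

Definition in_theta_minus n m (H : pred (seq bool)) (i : 'I_n)
  (theta : 'I_n -> nat) : Prop :=
  exists h, H h /\ forall k : 'I_n, k != i -> theta_set n m h k (theta k).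

Record outcome (n : nat) := Outcome { win_prob : 'I_n -> rat; pay : nat }.

Definition maxv n (theta : 'I_n -> nat) : nat := \max_(k < n) theta k.

Definition second_highest n (theta : 'I_n -> nat) : nat :=
  nth 0 (sort (fun a b => (b <= a)%N) [seq theta k | k <- enum 'I_n]) 1.

Definition spa n (theta : 'I_n -> nat) : outcome n :=
  Outcome n (fun k => if theta k == maxv n theta
                    then ((#|[pred l | theta l == maxv n theta]|%:R)^-1)%R
                    else 0%R)
          (second_highest n theta).

Definition exp_payoff n (j : 'I_n) (v : nat) (o : outcome n) : rat :=
  (win_prob n o j * (v%:R - (pay n o)%:R))%R.

Definition weakly_prefers n (j : 'I_n) (v : nat) (o1 o2 : outcome n) : Prop :=
  (exp_payoff n j v o2 <= exp_payoff n j v o1)%R.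

Definition others (i j : nat) : pred nat := fun k => (k != i) && (k != j).

Definition ill_ip_cond n m (i : 'I_n) (h0 : seq bool)
  (H1 H2 : pred (seq bool)) : Prop :=
  forall j : 'I_n, j != i ->
  forall theta1 theta2 : 'I_n -> nat,
    theta_set n m h0 i (theta1 i) -> theta_set n m h0 i (theta2 i) ->
    inV m (theta1 j) -> inV m (theta2 j) ->
    in_theta_minus n m H1 i theta1 -> in_theta_minus n m H2 i theta2 ->
    (exists s : strategy, measurable_on n m (others i j) s /\
       prof_consistent n m (others i j) s theta1 /\
       prof_consistent n m (others i j) s theta2) ->
    weakly_prefers n j (theta1 j) (spa n theta1) (spa n theta2).

(* The ILL w.r.t. the unordered partition {H1, H2} is incentive-preserving:
   the condition holds whichever part is labelled 1. *)
Definition ill_incentive_preserving n m (i : 'I_n) (h0 : seq bool)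
  (H1 H2 : pred (seq bool)) : Prop :=
  ill_ip_cond n m i h0 H1 H2 /\ ill_ip_cond n m i h0 H2 H1.

From mathcomp Require Import all_boot all_order all_algebra.
From mathcomp Require Import zify.
Import Order.TTheory GRing.Theory Num.Theory.
Set Implicit Arguments. Unset Strict Implicit.

(* A nontrivial information set of bidder i in G* sits at some price p after
   the earlier movers of that price level made choices with at most one stay.
   It contains the history z0 in which all of them left and a history y in
   which exactly one of them, j, stayed.  Let theta1 give i and j the value
   p + 1 and every other active bidder the value p, and theta2 give every
   active bidder the value p.  Then theta_{-i} lies in Theta_{-i} at y for
   theta1 and at z0 for theta2, and the remaining bidders move identically on
   the two resulting plays, so one strategy profile of theirs is consistent
   with both.  Yet for j with value p + 1 the outcome under theta2 (she is
   among the highest and pays p) is strictly better than under theta1 (i also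
   has value p + 1, so she pays at least her value). *)

Section Execution.
Variables n m : nat.

Lemma exec_rcons h b : exec n m (rcons h b) = step m (exec n m h) b.
Proof. by rewrite /exec -cats1 foldl_cat. Qed.

Lemma exec_take_dec z x t : exec n m z = Some x -> t < size z ->
  exists p A d, exec n m (take t z) = Some (Dec p A d).
Proof.
rewrite -{1}(cat_take_drop t z) /exec foldl_cat -/(exec n m (take t z)).
have foldl_None s : foldl (step m) None s = None by elim: s.
case: (drop t z) (size_drop t z) => [|b e] /= sz; first lia.
by case: (exec n m (take t z)) => [[p A d|]|]; rewrite /= ?foldl_None; eauto.
Qed.

Lemma theta_set_rcons h b k v :
  theta_set n m (rcons h b) k v =
  if mover n m h == Some k then
    (if b then price_at n m h < v <= m else v == price_at n m h)
  else theta_set n m h k v.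
Proof.
rewrite /theta_set size_rcons -addn1 iotaD add0n /= filter_cat /= -cats1.
have -> : [seq t <- iota 0 (size h) | mover n m (take t (h ++ [:: b])) == Some k]
        = [seq t <- iota 0 (size h) | mover n m (take t h) == Some k].
  by apply: eq_in_filter => t; rewrite mem_iota => /andP[_ lt]; rewrite takel_cat // ltnW.
rewrite take_size_cat //.
set ts := filter _ _.
have lt_ts t : t \in ts -> t < size h by rewrite mem_filter mem_iota => /and3P[].
have nth_b : nth false (h ++ [:: b]) (size h) = b by rewrite nth_cat ltnn subnn.
case: ifP => _.
  case: ts lt_ts => [|t0 ts] _ /=;
  by rewrite ?last_cat /= nth_b take_size_cat //; case: b {nth_b}.
rewrite cats0; case: ts lt_ts => [//|t0 ts] lt_ts.
have lt_last := lt_ts _ (mem_last t0 ts).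
by rewrite nth_cat lt_last takel_cat // ltnW.
Qed.

Section Round.
Variables (P : seq bool) (p : nat) (A : seq nat).
Hypothesis execP : exec n m P = Some (Dec p A [::]).

Lemma exec_within_round e : size e < size A -> exec n m (P ++ e) = Some (Dec p A e).
Proof.
elim/last_ind: e => [|e b IH]; first by rewrite cats0.
rewrite size_rcons => lt_eA; rewrite -rcons_cat exec_rcons IH; last lia.
by rewrite /= size_rcons lt_eA.
Qed.

Lemma mover_within_round e : size e < size A ->
  mover n m (P ++ e) = Some (nth 0 A (size e)).
Proof. by move=> lt_eA; rewrite /mover exec_within_round. Qed.

Lemma price_within_round e : size e < size A -> price_at n m (P ++ e) = p.
Proof. by move=> lt_eA; rewrite /price_at exec_within_round. Qed.

Lemma exec_round_end w : size w = size A -> 0 < size A ->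
  exec n m (P ++ w) = if (1 < size (mask w A)) && (p.+1 < m)
                      then Some (Dec p.+1 (mask w A) [::]) else Some Term.
Proof.
case/lastP: w => [<- //|e b]; rewrite size_rcons => szA _.
by rewrite -rcons_cat exec_rcons exec_within_round /= ?size_rcons szA ?ltnn //; lia.
Qed.

Hypothesis uniqA : uniq A.

Lemma theta_set_within_round e k v : size e <= size A ->
  theta_set n m (P ++ e) k v =
  if index k A < size e then (if nth false e (index k A) then p < v <= m else v == p)
  else theta_set n m P k v.
Proof.
elim/last_ind: e => [|e b IH]; first by rewrite cats0.
rewrite size_rcons => le_eA; rewrite -rcons_cat theta_set_rcons.
rewrite mover_within_round ?price_within_round; try lia.
case: eqP => [[<-]|ne_k]; first by rewrite index_uniq // ltnSn nth_rcons ltnn eqxx.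
rewrite IH ?nth_rcons; last lia.
have ne_idx : index k A != size e.
  apply: contra_notN ne_k => /eqP idx; congr Some.
  have kA : k \in A by rewrite -index_mem idx; exact: le_eA.
  by rewrite -idx nth_index.
by rewrite ltnS (leq_eqVlt (index k A)) (negbTE ne_idx) /=; case: ifP.
Qed.

End Round.
End Execution.

Record round_start n m P p A : Prop := RoundStart {
  round_exec : exec n m P = Some (Dec p A [::]);
  round_uniq : uniq A;
  round_bidders : all (fun k => k < n) A;
  round_price : 0 < p < m;
  round_active : forall k v, k \in A -> p <= v <= m -> theta_set n m P k v;
  round_inactive : forall k, k < n -> k \notin A ->
    exists2 v, v < p & theta_set n m P k v }.

Lemma round_start_init n m : 2 <= m -> round_start n m [::] 1 (iota 0 n).
Proof.
move=> hm; split.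
- by [].
- exact: iota_uniq.
- by apply/allP => k; rewrite mem_iota.
- lia.
- by move=> k v _ hv; rewrite /theta_set /= /inV; lia.
- by move=> k kn; rewrite mem_iota /=; lia.
Qed.

Lemma round_start_next n m P p A w : round_start n m P p A ->
  size w = size A -> 1 < size (mask w A) -> p.+1 < m ->
  round_start n m (P ++ w) p.+1 (mask w A).
Proof.
move=> [execP uniqA bidA pricep act inact] szw szmask ltpm.
have thetaPw k v := theta_set_within_round execP uniqA k v (eq_leq szw).
have posA : 0 < size A.
  by have := count_size id w; rewrite -(size_mask szw) szw; lia.
split.
- by rewrite (exec_round_end execP) // szmask ltpm.
- exact: mask_uniq.
- exact: all_mask.
- by rewrite ltpm.
- move=> k v; rewrite in_mask // => /andP[kA stay] hv.
  by rewrite thetaPw szw index_mem kA stay; lia.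
- move=> k kn; rewrite in_mask //.
  case: (boolP (k \in A)) => [kA /= leave | kA _].
    by exists p => //; rewrite thetaPw szw index_mem kA (negbTE leave).
  have [v ltvp thv] := inact k kn kA.
  by exists v; rewrite ?thetaPw ?szw ?index_mem ?(negbTE kA) //; lia.
Qed.

Lemma exec_dec_round n m h p A d : 0 < n -> 2 <= m ->
  exec n m h = Some (Dec p A d) ->
  exists P, [/\ h = P ++ d, round_start n m P p A & size d < size A].
Proof.
move=> hn hm; elim/last_ind: h p A d => [|h b IH] p A d.
  case=> <- <- <-; exists [::]; split => //; first exact: round_start_init.
  by rewrite size_iota.
rewrite exec_rcons; case E: (exec n m h) => [[p0 A0 d0|]|] //=.
have [P0 [-> start0 ltd0]] := IH _ _ _ E.
case: ifP => [szd0 [<- <- <-]|]; first by exists P0; rewrite rcons_cat.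
rewrite size_rcons; case: ifP => // /andP[szmask ltpm] szd0 [<- <- <-].
exists (P0 ++ rcons d0 b); rewrite cats0 rcons_cat; split => //=; last lia.
by apply: round_start_next; rewrite // size_rcons; lia.
Qed.

Section InformationSets.
Variables n m : nat.
Hypotheses (hn : 0 < n) (hm : 2 <= m).

Lemma same_info_size h h' : same_info n m h h' -> size h = size h'.
Proof.
rewrite /same_info.
case E: (exec n m h) => [[p A d|]|] //; case E': (exec n m h') => [[p' A' d'|]|] //.
case/and3P => /eqP eq_pre /eqP eq_sz _.
have [P [eh _ _]] := exec_dec_round hn hm E.
have [P' [eh' _ _]] := exec_dec_round hn hm E'.
move: eq_pre; rewrite eh eh' !size_cat !addnK !take_size_cat // => ->.
by rewrite eq_sz.
Qed.

Lemma same_info_refl h p A d : exec n m h = Some (Dec p A d) -> same_info n m h h.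
Proof. by rewrite /same_info => ->; rewrite !eqxx. Qed.

Lemma same_info_eq h h' X : same_info n m h h' -> same_info n m h X = same_info n m h' X.
Proof.
rewrite /same_info.
case E: (exec n m h) => [[p A d|]|] //; case E': (exec n m h') => [[p' A' d'|]|] //.
case/and3P => /eqP -> /eqP eq_sz.
case: (eqVneq h h') => [eq_hh' _|_ /= /andP[small_d small_d']].
  by move: E'; rewrite -eq_hh' E => -[_ _ <-].
case EX: (exec n m X) => [[pX AX dX|]|] //; rewrite eq_sz.
have small_eq Y pY AY dY : exec n m Y = Some (Dec pY AY dY) -> count id dY < 2 ->
    (Y == X) || (count id dY < 2) && (count id dX < 2) = (count id dX < 2).
  move=> EY small_dY; case: eqP => [eq_YX|_]; last by rewrite small_dY.
  by move: EX; rewrite -eq_YX EY => -[_ _ <-].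
by rewrite (small_eq _ _ _ _ E small_d) (small_eq _ _ _ _ E' small_d').
Qed.

Definition play_along (z h : seq bool) : option bool :=
  if (size h < size z) && same_info n m h (take (size h) z)
  then Some (nth false z (size h)) else None.

Lemma play_along_info z h h' : same_info n m h h' -> play_along z h = play_along z h'.
Proof. by move=> hh'; rewrite /play_along (same_info_size hh') (same_info_eq _ hh'). Qed.

Lemma play_along_path z t p A d : t < size z ->
  exec n m (take t z) = Some (Dec p A d) -> play_along z (take t z) = Some (nth false z t).
Proof.
move=> ltz E; rewrite /play_along size_takel ?(ltnW ltz) // ltz.
by rewrite (same_info_refl E).
Qed.

Lemma hist_consistent_terminal (Q : pred nat) (s : strategy) z :
  measurable_on n m predT s ->
  (forall t k, t < size z -> mover n m (take t z) = Some k -> Q k ->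
     s k (take t z) = nth false z t) ->
  is_terminal n m z -> hist_consistent n m Q s z.
Proof.
move=> meas_s s_on_z; rewrite /is_terminal; case ez: (exec n m z) => [x|] // _.
exists (fun k h => if Q k then s k h else odflt false (play_along z h)); split; [|split].
- move=> k h h' _ mk hh'; case: (Q k); first exact: meas_s mk hh'.
  by rewrite (play_along_info _ hh').
- by move=> k h' -> .
- move=> t ltz; have [p [A [d E]]] := exec_take_dec ez ltz.
  exists (nth 0 A (size d)); split; first by rewrite /mover E.
  case: ifP => Qk; last by rewrite (play_along_path ltz E).
  by rewrite s_on_z // /mover E.
Qed.

Lemma consistent_pair (Q : pred nat) z1 z2 :
  is_terminal n m z1 -> is_terminal n m z2 ->
  (forall t k, t < size z1 -> t < size z2 -> mover n m (take t z2) = Some k -> Q k ->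
     nth false z1 t = nth false z2 t) ->
  exists s : strategy, [/\ measurable_on n m Q s,
    hist_consistent n m Q s z1 & hist_consistent n m Q s z2].
Proof.
move=> term1 term2 agree.
pose s : strategy := fun k h =>
  if play_along z1 h is Some b then b else odflt false (play_along z2 h).
have meas_s : measurable_on n m predT s.
  by move=> k h h' _ _ hh'; rewrite /s (play_along_info _ hh') (play_along_info _ hh').
exists s; split.
- by move=> k h h' _; apply: meas_s.
- apply: hist_consistent_terminal => // t k ltz1.
  rewrite /mover; case E: (exec n m (take t z1)) => [[p A d|]|] // _ _.
  by rewrite /s (play_along_path ltz1 E).
- apply: hist_consistent_terminal => // t k ltz2 mk Qk.
  move: mk; rewrite /mover; case E: (exec n m (take t z2)) => [[p A d|]|] // mk.
  rewrite /s {1}/play_along size_takel ?(ltnW ltz2) //.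
  case: ifP => [/andP[ltz1 _]|_]; first by apply: (agree _ k) => //; rewrite /mover E.
  by rewrite (play_along_path ltz2 E).
Qed.

End InformationSets.

Lemma sorted_geq_nth1 (s : seq nat) c :
  sorted geq s -> 1 < count (leq c) s -> c <= nth 0 s 1.
Proof.
case: s => [|x0 [|x1 s]] //=; first by case: (c <= x0).
case/andP=> _ path_x1 two; rewrite leqNgt; apply/negP => lt_x1c; move: two.
have geq_trans : transitive geq by move=> y x z le_yx le_zy; apply: leq_trans le_zy le_yx.
have below_x1 := allP (order_path_min geq_trans path_x1).
have -> : count (leq c) s = 0.
  apply/eqP; rewrite -leqn0 leqNgt -has_count; apply/hasPn => x /below_x1 /= le_xx1.
  by rewrite -ltnNge (leq_ltn_trans le_xx1 lt_x1c).
by rewrite (leqNgt c x1) lt_x1c /= addn0; case: (c <= x0).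
Qed.

Section SecondPrice.
Variables (n : nat) (th : 'I_n -> nat).

Lemma second_highest_ge (i j : 'I_n) c : i != j -> c <= th i -> c <= th j ->
  c <= second_highest n th.
Proof.
move=> ij ci cj; apply: sorted_geq_nth1.
  exact: (sort_sorted (fun a b => leq_total b a)).
rewrite (permP (permEl (perm_sort _ _))) count_map.
have -> : count (preim th (leq c)) (enum 'I_n) = #|preim th (leq c)|.
  by rewrite cardE enumT /enum_mem size_filter.
have <- : #|[set i; j]| = 2 by rewrite cards2 ij.
apply: subset_leq_card.
by apply/subsetP => k; rewrite !inE => /orP[] /eqP ->.
Qed.

Lemma second_highest_le c : (forall k, th k <= c) -> second_highest n th <= c.
Proof.
move=> le_c; rewrite /second_highest.
set s := sort _ _; case: (ltnP 1 (size s)) => [lt1|ge1]; last by rewrite nth_default.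
by have := mem_nth 0 lt1; rewrite mem_sort => /mapP[k _ ->].
Qed.

Lemma spa_payoff_le0 (i j : 'I_n) v : i != j -> v <= th i -> v <= th j ->
  (exp_payoff n j v (spa n th) <= 0)%R.
Proof.
move=> ij vi vj; rewrite /exp_payoff /=; apply: mulr_ge0_le0.
  by case: ifP => // _; rewrite invr_ge0 ler0n.
by rewrite subr_le0 ler_nat (second_highest_ge ij).
Qed.

Lemma spa_payoff_gt0 (j : 'I_n) v : (forall k, th k <= th j) ->
  second_highest n th < v -> (0 < exp_payoff n j v (spa n th))%R.
Proof.
move=> j_max lt_v; rewrite /exp_payoff /=.
have -> : maxv n th = th j.
  by apply/eqP; rewrite eqn_leq (leq_bigmax j) andbT; apply/bigmax_leqP.
rewrite eqxx mulr_gt0 //; last by rewrite subr_gt0 ltr_nat.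
by rewrite invr_gt0 ltr0n; apply/card_gt0P; exists j; rewrite inE.
Qed.

End SecondPrice.

Lemma index_eq_nth (T : eqType) (x0 x : T) (s : seq T) l : uniq s -> l < size s ->
  (index x s == l) = (x == nth x0 s l).
Proof.
move=> uniq_s lt_ls; apply/eqP/eqP => [idx|->]; last exact: index_uniq.
by rewrite -idx nth_index // -index_mem idx.
Qed.

Lemma count_id0 (s : seq bool) : count id s = 0 -> s = nseq (size s) false.
Proof. by elim: s => [|[] s IH] //= /IH {1}->. Qed.

Lemma count_id1 (s : seq bool) : count id s = 1 ->
  index true s < size s /\ forall l, nth false s l = (l == index true s).
Proof.
elim: s => [|[] s IH] //=.
  by move=> [/count_id0 ->]; split=> // -[|l] /=; rewrite ?nth_nseq ?if_same.
by move=> /IH [lt_s nth_s]; split=> [|[|l]] //=; rewrite nth_s.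
Qed.

Section RoundDeviation.
Variables (n m : nat) (P : seq bool) (p : nat) (A : seq nat).
Hypothesis start : round_start n m P p A.

Let execP := round_exec start.
Let uniqA := round_uniq start.

Definition past_value (k : nat) : nat :=
  if [pick v : 'I_p | theta_set n m P k v] is Some v then val v else 0.

Lemma past_valueP k : k < n -> k \notin A ->
  past_value k < p /\ theta_set n m P k (past_value k).
Proof.
move=> kn kA; have [v ltvp thv] := round_inactive start kn kA.
rewrite /past_value; case: pickP => [u thu | none]; first by split; first exact: ltn_ord.
by have := none (Ordinal ltvp); rewrite /= thv.
Qed.

Definition round_profile (w : seq bool) (k : 'I_n) : nat :=
  if (k : nat) \in A then (if nth false w (index (k : nat) A) then p.+1 else p)
  else past_value k.

Definition round_end (w : seq bool) : seq bool :=
  P ++ w ++ (if (1 < size (mask w A)) && (p.+1 < m)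
             then nseq (size (mask w A)) false else [::]).

Lemma theta_round_profile w e (k : 'I_n) : size e <= size A ->
  (index (k : nat) A < size e ->
     nth false e (index (k : nat) A) = nth false w (index (k : nat) A)) ->
  theta_set n m (P ++ e) k (round_profile w k).
Proof.
move=> le_eA agree; have /andP[_ ltpm] := round_price start.
rewrite (theta_set_within_round execP uniqA) // /round_profile.
case: (boolP ((k : nat) \in A)) => [kA|kA].
  case: ltnP => [lt_e|ge_e].
    by rewrite agree //; case: (nth false w _); rewrite /= ?ltnSn ?eqxx.
  by apply: (round_active start) => //; case: ifP; lia.
rewrite ltnNge (leq_trans le_eA) ?memNindex //.
by have [] := past_valueP (ltn_ord k) kA.
Qed.

Lemma round_end_terminal w : size w = size A -> 0 < size A ->
  is_terminal n m (round_end w) /\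
  forall k : 'I_n, theta_set n m (round_end w) k (round_profile w k).
Proof.
move=> szw posA.
have end1 := exec_round_end execP szw posA.
rewrite /round_end; case: ifP end1 => [/andP[szmask ltp1m]|_] end1; last first.
  rewrite cats0; split; first by rewrite /is_terminal end1.
  by move=> k; apply: theta_round_profile; rewrite ?szw.
have [exec2 uniq2 _ _ _ _] := round_start_next start szw szmask ltp1m.
rewrite catA; split.
  by rewrite /is_terminal (exec_round_end exec2) ?size_nseq ?mask_false //; lia.
move=> k; rewrite (theta_set_within_round exec2 uniq2) ?size_nseq //.
rewrite index_mem; case: ifP => [stay|_].
  by rewrite nth_nseq if_same /round_profile; move: stay; rewrite in_mask // => /andP[-> ->].
by apply: theta_round_profile; rewrite ?szw.
Qed.

Lemma round_end_nseq : round_end (nseq (size A) false) = P ++ nseq (size A) false.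
Proof. by rewrite /round_end mask_false /= cats0. Qed.

Lemma round_end_agree w t k : size w = size A ->
  t < size (P ++ nseq (size A) false) ->
  mover n m (take t (P ++ nseq (size A) false)) = Some k ->
  ~~ nth false w (index k A) ->
  nth false (round_end w) t = nth false (P ++ nseq (size A) false) t.
Proof.
move=> szw; rewrite size_cat size_nseq => ltt.
case: (ltnP t (size P)) => tP; first by rewrite /round_end !nth_cat tP.
have lt_lA : t - size P < size A by lia.
rewrite take_cat ltnNge tP /= take_nseq ?(ltnW lt_lA) //.
rewrite (mover_within_round execP) ?size_nseq // => -[<-].
rewrite index_uniq // /round_end !nth_cat ltnNge tP /= szw lt_lA nth_nseq lt_lA.
exact: negbTE.
Qed.

Lemma round_profile_nseq_le k : round_profile (nseq (size A) false) k <= p.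
Proof.
rewrite /round_profile nth_nseq if_same; case: ifPn => // kA.
by have [/ltnW] := past_valueP (ltn_ord k) kA.
Qed.

Lemma round_profiles_consistent w (Q : pred nat) : size w = size A -> 0 < size A ->
  (forall k, Q k -> ~~ nth false w (index k A)) ->
  exists s : strategy, [/\ measurable_on n m Q s,
    prof_consistent n m Q s (round_profile w) &
    prof_consistent n m Q s (round_profile (nseq (size A) false))].
Proof.
move=> szw posA Q_leave; have /andP[p0 ltpm] := round_price start.
have hn : 0 < n.
  by case: A posA (round_bidders start) => //= k A' _ /andP[kn _]; apply: leq_ltn_trans kn.
have [term1 th_z1] := round_end_terminal szw posA.
have [term2 th_z2] := round_end_terminal (size_nseq (size A) false) posA.
have agree t k : t < size (round_end w) -> t < size (round_end (nseq (size A) false)) ->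
    mover n m (take t (round_end (nseq (size A) false))) = Some k -> Q k ->
    nth false (round_end w) t = nth false (round_end (nseq (size A) false)) t.
  by rewrite round_end_nseq => _ lt2 mk /Q_leave; apply: round_end_agree.
have [|s [meas_s cons1 cons2]] := consistent_pair hn _ term1 term2 agree; first lia.
by exists s; split=> //; [exists (round_end w) | exists (round_end (nseq (size A) false))].
Qed.

(* A bidder j who raises her value to p + 1 together with a rival i goes from a
   positive payoff (all values at most p) to a non-positive one (two values p + 1). *)
Lemma round_profile_payoff_lt w (i j : 'I_n) : j != i ->
  round_profile w i = p.+1 -> round_profile w j = p.+1 -> (j : nat) \in A ->
  (exp_payoff n j p.+1 (spa n (round_profile w)) <
   exp_payoff n j p.+1 (spa n (round_profile (nseq (size A) false))))%R.
Proof.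
move=> ji th_i th_j jA; have le_p := round_profile_nseq_le.
have th_j0 : round_profile (nseq (size A) false) j = p.
  by rewrite /round_profile jA nth_nseq if_same.
apply: (@le_lt_trans _ _ 0%R).
  by apply: (spa_payoff_le0 (i := i)); rewrite 1?eq_sym ?th_i ?th_j.
apply: spa_payoff_gt0; first by move=> k; rewrite th_j0.
by rewrite ltnS; apply: second_highest_le.
Qed.

Lemma round_not_ip_cond r (i : 'I_n) d dy (Ha Hb : pred (seq bool)) :
  r < size A -> val i = nth 0 A r -> size d = r -> size dy = r -> count id dy = 1 ->
  Hb (P ++ dy) -> Ha (P ++ nseq r false) -> ~ ill_ip_cond n m i (P ++ d) Hb Ha.
Proof.
move=> ltrA iA szd szdy one_stay Hby Haz ip.
have /andP[p0 ltpm] := round_price start.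
have [lt_k0 nth_dy] := count_id1 one_stay; set k0 := index true dy in lt_k0 nth_dy.
have lt_k0A : k0 < size A by lia.
pose j := Ordinal (allP (round_bidders start) _ (mem_nth 0 lt_k0A)).
have ji : j != i.
  by apply/negP => /eqP/(congr1 val) /=; rewrite iA => /eqP; rewrite nth_uniq //; lia.
pose w := mkseq (fun l => (l == k0) || (l == r)) (size A).
have stays k : nth false w (index k A) = (k == nth 0 A k0) || (k == nth 0 A r).
  case: (boolP (k \in A)) => kA; first by rewrite nth_mkseq ?index_mem // !(index_eq_nth 0).
  rewrite nth_default ?size_mkseq ?memNindex //; apply/esym/norP.
  by split; apply: contraNneq kA => ->; apply: mem_nth.
have th1_i : round_profile w i = p.+1.
  by rewrite /round_profile iA mem_nth // stays eqxx orbT.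
have th1_j : round_profile w j = p.+1.
  by rewrite /round_profile /= mem_nth // stays eqxx.
have others_leave k : others i j k -> ~~ nth false w (index k A).
  by move=> /andP[ki kj]; rewrite stays -iA; apply/norP.
have [s [meas_s cons1 cons2]] := @round_profiles_consistent w (others i j)
  (size_mkseq _ _) (leq_ltn_trans (leq0n k0) lt_k0A) others_leave.
have idx_i : index (val i) A = r by rewrite iA index_uniq.
have pref : weakly_prefers n j (round_profile w j) (spa n (round_profile w))
                             (spa n (round_profile (nseq (size A) false))).
  apply: ip => //; try by exists s.
  - by apply: theta_round_profile; rewrite szd ?idx_i ?ltnn //; lia.
  - by apply: theta_round_profile; rewrite szd ?idx_i ?ltnn //; lia.
  - by rewrite th1_j /inV; lia.
  - by rewrite /round_profile /= mem_nth // nth_nseq if_same /inV; lia.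
  - exists (P ++ dy); split=> // k _; apply: theta_round_profile; first lia.
    by move=> lt_dy; rewrite nth_dy nth_mkseq ?(@ltn_eqF _ r) ?orbF //; lia.
  - exists (P ++ nseq r false); split=> // k _.
    by apply: theta_round_profile => [|_]; rewrite ?size_nseq ?nth_nseq ?if_same // ltnW.
move: pref; rewrite /weakly_prefers th1_j leNgt.
by rewrite (round_profile_payoff_lt ji th1_i th1_j (mem_nth 0 lt_k0A)).
Qed.

End RoundDeviation.

Section RoundInformation.
Variables (n m : nat) (P : seq bool) (p : nat) (A : seq nat) (d : seq bool).
Hypotheses (hn : 0 < n) (hm : 2 <= m) (start : round_start n m P p A).
Hypothesis ltdA : size d < size A.

Lemma same_info_roundP h : same_info n m (P ++ d) h ->
  exists d', [/\ h = P ++ d', size d' = size d &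
                 (d == d') || (count id d < 2) && (count id d' < 2)].
Proof.
rewrite /same_info (exec_within_round (round_exec start) ltdA).
case E: (exec n m h) => [[p' A' d'|]|] //; case/and3P => /eqP eq_pre /eqP eq_sz small.
have [P' [eh _ _]] := exec_dec_round hn hm E.
move: eq_pre small; rewrite eh !size_cat !addnK !take_size_cat // => <-.
by rewrite eqseq_cat // (eqxx P); exists d'.
Qed.

Lemma same_info_round_small d' : size d' = size d ->
  count id d < 2 -> count id d' < 2 -> same_info n m (P ++ d) (P ++ d').
Proof.
move=> eq_sz small small'.
rewrite /same_info !(exec_within_round (round_exec start)) //; last by rewrite eq_sz.
by rewrite !size_cat !addnK !take_size_cat // eq_sz !eqxx small small' orbT.
Qed.

Lemma same_info_round_nontrivial h h' : h != h' ->
  same_info n m (P ++ d) h -> same_info n m (P ++ d) h' -> count id d < 2.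
Proof.
move=> neq /same_info_roundP [d1 [eh _ c1]] /same_info_roundP [d2 [eh' _ c2]].
rewrite ltnNge; apply: contra_neqN neq => big; rewrite eh eh'.
by move: c1 c2; rewrite ltnNge big /= !orbF => /eqP <- /eqP <-.
Qed.

Lemma same_info_round_one_stay y : count id d < 2 -> same_info n m (P ++ d) y ->
  y != P ++ nseq (size d) false ->
  exists dy, [/\ y = P ++ dy, size dy = size d & count id dy = 1].
Proof.
move=> small /same_info_roundP [dy [-> szdy c]] neq; exists dy; split=> //.
have small_dy : count id dy < 2 by case/orP: c => [/eqP <- //|/andP[]].
case: (posnP (count id dy)) => [/count_id0 dy0|]; last lia.
by move: neq; rewrite {1}dy0 szdy eqxx.
Qed.

Lemma same_info_round_part_not_ip (i : 'I_n) (Ha Hb : pred (seq bool)) y :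
  val i = nth 0 A (size d) -> count id d < 2 ->
  Ha (P ++ nseq (size d) false) -> Hb y ->
  (forall h, same_info n m (P ++ d) h = Ha h || Hb h) -> (forall h, ~~ (Ha h && Hb h)) ->
  ~ ill_ip_cond n m i (P ++ d) Hb Ha.
Proof.
move=> iA small Ha_z0 Hb_y parts disj.
have info_y : same_info n m (P ++ d) y by rewrite parts Hb_y orbT.
have neq_y : y != P ++ nseq (size d) false.
  by apply: (contraNneq _ (disj y)) => eq_y; rewrite Hb_y andbT eq_y.
have [dy [eq_y szdy one]] := same_info_round_one_stay small info_y neq_y.
rewrite eq_y in Hb_y.
exact: (round_not_ip_cond start ltdA iA erefl szdy one Hb_y Ha_z0).
Qed.

End RoundInformation.

Unset Implicit Arguments. Set Strict Implicit.

Theorem proposition10 (n m : nat) (hn : (2 <= n)%N) (hm : (2 <= m)%N)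
  (i : 'I_n) (h0 : seq bool) :
  mover n m h0 = Some (nat_of_ord i) ->
  (exists h h', h != h' /\ info_set n m h0 h /\ info_set n m h0 h') ->
  forall H1 H2 : pred (seq bool),
    (forall h, info_set n m h0 h = H1 h || H2 h) ->
    (forall h, ~~ (H1 h && H2 h)) ->
    (exists h, H1 h) -> (exists h, H2 h) ->
    ~ ill_incentive_preserving n m i h0 H1 H2.
Proof.
move=> mover_i [h [h' [neq [info_h info_h']]]] H1 H2 parts disj [y1 H1y1] [y2 H2y2].
have hn0 : 0 < n by lia.
move: mover_i; rewrite /mover; case E0: (exec n m h0) => [[p A d|]|] // [iA].
have [P [eh0 start ltdA]] := exec_dec_round hn0 hm E0; subst h0.
have small := same_info_round_nontrivial hn0 hm start ltdA neq info_h info_h'.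
have not_ip := same_info_round_part_not_ip hn0 hm start ltdA (esym iA) small.
have : info_set n m (P ++ d) (P ++ nseq (size d) false).
  by apply: (same_info_round_small start ltdA); rewrite ?size_nseq ?count_nseq ?mul0n.
rewrite parts => /orP[H1z0|H2z0] [ip12 ip21].
- exact: (not_ip H1 H2 y2 H1z0 H2y2 parts disj ip21).
- apply: (not_ip H2 H1 y1 H2z0 H1y1 _ _ ip12) => g; first by rewrite orbC -parts.
  by rewrite andbC.
Qed.
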